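(* Let $K=3$. For generic $H\in\mathbb{C}^{3\times 3}$ (that is, for all $H$ outside the zero set of some nonzero polynomial in the entries of $H$), there exist diagonal matrices $D_1,D_2,D_3\in\mathbb{C}^{3\times 3}$ such that, with $B := HD_2 + HD_3H^TD_1H$, the following hold for each $i\in\{1,2,3\}$: (i) $\dfrac{B_{ij}}{H_{ij}} = \dfrac{B_{ij'}}{H_{ij'}}$ for all $j,j'\neq i$; (ii) $\dfrac{B_{ii}}{H_{ii}} \neq \dfrac{B_{ij}}{H_{ij}}$ for all $j\neq i$.
   Context: Setting: a 3-user interference channel with forward channel matrix $H$ ($H_{ij}$ is the gain from source $s_j$ to destination $t_i$) and reciprocal feedback channel $G=H^T$, using a three-phase scheme: destinations receive $y=Hx$ in phase 1, sources receive $H^TD_1y$ in phase 2, and destinations receive $Bx$ in phase 3 (noise ignored), with diagonal coding matrices $D_1,D_2,D_3$. Condition (i) (interference alignment) and (ii) (desired signal preserved) allow each destination to cancel all interference by a linear combination of its phase-1 and phase-3 observations. *)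

From HB Require Import structures.
From mathcomp Require Import all_boot all_order all_algebra.
From mathcomp Require Import reals complex.
From mathcomp Require Import mpoly.
Set Implicit Arguments. Unset Strict Implicit. Unset Printing Implicit Defensive.
Import Order.TTheory GRing.Theory Num.Theory.
Local Open Scope ring_scope.

Definition mx_eval (F : fieldType) (p : {mpoly F[3 * 3]}) (H : 'M[F]_3) : F :=
  p.@[fun k : 'I_(3 * 3) => mxvec H 0 k].

Definition B_mx (F : fieldType) (H D1 D2 D3 : 'M[F]_3) : 'M[F]_3 :=
  H *m D2 + H *m D3 *m H^T *m D1 *m H.

From HB Require Import structures.
From mathcomp Require Import all_boot all_order all_algebra.
From mathcomp Require Import reals complex.
From mathcomp Require Import mpoly.
From mathcomp Require Import ring.
Set Implicit Arguments. Unset Strict Implicit. Unset Printing Implicit Defensive.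
Import GRing.Theory Num.Theory.
Local Open Scope ring_scope.

(* With D3 = diag(1,0,0) and D1 = diag(a,b,0) the feedback term has rank one:
   B_ij = H_ij d2_j + H_i0 g_j with g_j = a H_00 H_0j + b H_10 H_1j, so
   B_ij / H_ij = d2_j + g_j H_i0 / H_ij.  Taking d2_j = - g_j H_k0 / H_kj with
   k the row outside {0, j} kills column 0 and the off-diagonal entries of
   rows 1 and 2, and leaves on row 0 the ratios g_1 m_021 / (H_01 H_21) and
   g_2 m_012 / (H_02 H_12), m_ikj being the minor on rows i, k and columns
   0, j.  Equating them is one linear condition on (a, b), with a polynomial
   solution.  What remains is the non-vanishing of entries, minors and gains,
   i.e. of one polynomial, which is nonzero at an integer matrix. *)

Lemma ord3P (i : 'I_3) : [\/ i = 0, i = 1 | i = 2].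
Proof.
by case: i => [[|[|[|//]]] ?]; [apply: Or31 | apply: Or32 | apply: Or33];
  apply: val_inj.
Qed.

Lemma separated_row (T V : eqType) (r : T -> V) (i : T) (v : V) :
  (forall j, j != i -> r j = v) -> r i != v ->
  (forall j j', j != i -> j' != i -> r j = r j') /\
  (forall j, j != i -> r i != r j).
Proof. by move=> offv riv; split=> [j j' /offv-> /offv-> | j /offv->]. Qed.

Section GenericExpressions.
Variables (R : comNzRingType) (x : 'M[R]_3).

Definition minor_col0 (i k j : 'I_3) : R := x i 0 * x k j - x k 0 * x i j.

Definition balance_coef (l : 'I_3) : R :=
  x l 0 * (x l 1 * (minor_col0 0 2 1 * x 0 2 * x 1 2)
           - x l 2 * (minor_col0 0 1 2 * x 0 1 * x 2 1)).

Definition gain (j : 'I_3) : R :=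
  balance_coef 1 * x 0 0 * x 0 j - balance_coef 0 * x 1 0 * x 1 j.

Definition genericity : R :=
  (\prod_i \prod_j x i j) * minor_col0 0 2 1 * minor_col0 1 2 1 * minor_col0 2 1 2
  * gain 1 * gain 2.

(* The weights (balance_coef 1, - balance_coef 0) are orthogonal to
   (balance_coef 0, balance_coef 1). *)
Lemma gain_balance :
  gain 1 * (minor_col0 0 2 1 * x 0 2 * x 1 2)
  = gain 2 * (minor_col0 0 1 2 * x 0 1 * x 2 1).
Proof. by rewrite /gain /balance_coef; ring. Qed.

End GenericExpressions.

Lemma genericity_map (R S : comNzRingType) (f : {rmorphism R -> S})
    (x : 'M[R]_3) :
  f (genericity x) = genericity (map_mx f x).
Proof.
have f_prod : f (\prod_i \prod_j x i j) = \prod_i \prod_j map_mx f x i j.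
  rewrite rmorph_prod; apply: eq_bigr => i _.
  by rewrite rmorph_prod; apply: eq_bigr => j _; rewrite mxE.
rewrite /genericity /gain /balance_coef /minor_col0 !rmorphM f_prod.
by rewrite !(rmorphM, rmorphB) !mxE.
Qed.

Lemma genericityP (F : idomainType) (x : 'M[F]_3) :
  genericity x != 0 ->
  [/\ forall i j, x i j != 0, gain x 1 * minor_col0 x 0 2 1 != 0,
      gain x 1 * minor_col0 x 1 2 1 != 0 & gain x 2 * minor_col0 x 2 1 2 != 0].
Proof.
rewrite /genericity !mulf_eq0 !negb_or.
move=> /andP[/andP[/andP[/andP[/andP[/prodf_neq0 x_neq0 ?] ?] ?] ?] ?].
split=> [i j|||]; try by apply/andP.
by have /prodf_neq0 := x_neq0 i isT; apply.
Qed.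

Lemma B_mx_rank_one_feedback (F : fieldType) (H : 'M[F]_3) (a b : F)
    (d2 : 'rV[F]_3) (i j : 'I_3) :
  B_mx H (diag_mx (\row_k [:: a; b; 0]`_k)) (diag_mx d2)
    (diag_mx (delta_mx 0 0)) i j
  = H i j * d2 0 j + H i 0 * (a * H 0 0 * H 0 j + b * H 1 0 * H 1 j).
Proof.
rewrite /B_mx !mul_mx_diag !mxE !big_ord_recl big_ord0 /=.
rewrite !mxE !big_ord_recl !big_ord0 /= !mxE /=.
have -> : lift ord0 (lift ord0 ord0) = 2 :> 'I_3 by apply: val_inj.
have -> : lift ord0 ord0 = 1 :> 'I_3 by apply: val_inj.
have -> : ord0 = 0 :> 'I_3 by apply: val_inj.
ring.
Qed.

Section CodingMatrices.
Variables (F : fieldType) (H : 'M[F]_3).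

Definition partner (j : 'I_3) : 'I_3 := if j == 1 then 2 else 1.

Definition coding1 : 'M[F]_3 :=
  diag_mx (\row_k [:: balance_coef H 1; - balance_coef H 0; 0]`_k).
Definition coding2 : 'M[F]_3 :=
  diag_mx (\row_j (- gain H j * (H (partner j) 0 / H (partner j) j))).
Definition coding3 : 'M[F]_3 := diag_mx (delta_mx 0 0).

Local Notation ratio i j := (B_mx H coding1 coding2 coding3 i j / H i j).

Definition ratio_gap (j i k : 'I_3) : F := H i 0 / H i j - H k 0 / H k j.

Lemma ratio_coding (i j : 'I_3) : H i j != 0 ->
  ratio i j = gain H j * ratio_gap j i (partner j).
Proof.
move=> Hij; rewrite B_mx_rank_one_feedback mxE mulrDl mulrAC divff // mul1r.
by rewrite /gain /ratio_gap; ring.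
Qed.

Lemma ratio_gap_same (j i : 'I_3) : ratio_gap j i i = 0.
Proof. exact: subrr. Qed.

Hypothesis H_neq0 : forall i j, H i j != 0.

Lemma ratio_gap_col0 (i k : 'I_3) : ratio_gap 0 i k = 0.
Proof. by rewrite /ratio_gap !divff // subrr. Qed.

Lemma ratio_gap_minor (j i k : 'I_3) :
  ratio_gap j i k = minor_col0 H i k j / (H i j * H k j).
Proof. by rewrite /ratio_gap /minor_col0; field; rewrite !H_neq0. Qed.

Lemma ratio_gap_row0 :
  gain H 1 * ratio_gap 1 0 2 = gain H 2 * ratio_gap 2 0 1.
Proof.
apply/eqP; rewrite !ratio_gap_minor !mulrA eqr_div ?mulf_neq0 // !mulrA.
by have := gain_balance H; rewrite !mulrA => ->.
Qed.

Definition offdiag_ratio (i : 'I_3) : F :=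
  if i == 0 then gain H 1 * ratio_gap 1 0 2 else 0.

Lemma ratio_offdiag (i j : 'I_3) : j != i -> ratio i j = offdiag_ratio i.
Proof.
rewrite ratio_coding // /offdiag_ratio /partner.
case: (ord3P i) => ->; case: (ord3P j) => ->; rewrite ?eqxx //= => _.
  by rewrite ratio_gap_row0.
all: by rewrite ?ratio_gap_col0 ?ratio_gap_same mulr0.
Qed.

Lemma ratio_diag (i : 'I_3) :
  gain H 1 * minor_col0 H 0 2 1 != 0 -> gain H 1 * minor_col0 H 1 2 1 != 0 ->
  gain H 2 * minor_col0 H 2 1 2 != 0 ->
  ratio i i != offdiag_ratio i.
Proof.
move=> g021 g121 g212; rewrite ratio_coding // /offdiag_ratio /partner.
have gap_neq0 j k l : gain H j * minor_col0 H k l j != 0 ->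
    gain H j * ratio_gap j k l != 0.
  by move=> gm; rewrite ratio_gap_minor mulrA mulf_neq0 // invr_eq0 mulf_neq0.
case: (ord3P i) => -> /=; rewrite ?subr0 ?gap_neq0 //.
by rewrite ratio_gap_col0 mulr0 eq_sym gap_neq0.
Qed.

End CodingMatrices.

Definition witness_mx : 'M[int]_3 :=
  \matrix_(i < 3, j < 3)
    nth 0 (nth [::] [:: [:: 1; 2; 3]; [:: 1; 1; 2]; [:: 2; 1; 1]] i) j.

Lemma genericity_witness : genericity witness_mx != 0.
Proof.
by rewrite /genericity /gain /balance_coef /minor_col0 !big_ord_recl !big_ord0 !mxE.
Qed.

Theorem theorem3 (R : realType) :
  exists P : {mpoly (complex R)[3 * 3]},
    P != 0 /\
    forall H : 'M[complex R]_3,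
      mx_eval P H != 0 ->
      exists D1 D2 D3 : 'M[complex R]_3,
        [/\ is_diag_mx D1, is_diag_mx D2, is_diag_mx D3 &
        forall i : 'I_3,
          (forall j j' : 'I_3, j != i -> j' != i ->
             B_mx H D1 D2 D3 i j / H i j = B_mx H D1 D2 D3 i j' / H i j') /\
          (forall j : 'I_3, j != i ->
             B_mx H D1 D2 D3 i i / H i i != B_mx H D1 D2 D3 i j / H i j)].
Proof.
pose X : 'M[{mpoly (complex R)[3 * 3]}]_3 := \matrix_(i, j) 'X_(mxvec_index i j).
have eval_genericity H : mx_eval (genericity X) H = genericity H.
  rewrite /mx_eval genericity_map; congr genericity.
  apply/matrixP => i j; rewrite !mxE.
  exact: etrans (mevalXU _ _) (mxvecE _ _ _).
exists (genericity X); split.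
  apply: contra_neq genericity_witness => X0.
  apply/eqP; rewrite -(intr_eq0 (complex R)) -[_%:~R]/(intr _) genericity_map.
  by rewrite -eval_genericity X0 /mx_eval meval0.
move=> H; rewrite eval_genericity => /genericityP[H_neq0 g021 g121 g212].
exists (coding1 H), (coding2 H), (coding3 _); split; try exact: diag_mx_is_diag.
move=> i; apply: (separated_row (v := offdiag_ratio H i)).
  by move=> j; apply: ratio_offdiag.
exact: ratio_diag.
Qed.
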